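(* Let $X$ be a simple act taking values $x_1,\dots,x_n$ in an outcome set $\mathcal{X}$ with probabilities $p_i>0$, $\sum_{i=1}^n p_i=1$, let $u:\mathcal{X}\to\mathbb{R}$ and $u_i=u(x_i)$, and let $\beta\in(-1,\infty)$. Define $v^{(0)}=\sum_{i=1}^n p_iu_i$ and, for $k=1,2,\dots$, $v^{(k)}=\sum_{i=1}^n\tilde p_i^{(k)}u_i$, where $w_i^{(k)}=p_i$ if $u_i\ge v^{(k-1)}$, $w_i^{(k)}=(1+\beta)p_i$ if $u_i<v^{(k-1)}$, and $\tilde p_i^{(k)}=w_i^{(k)}/\sum_{j=1}^n w_j^{(k)}$. Then the sequence $(v^{(k)})$ converges monotonically, in at most $n-1$ steps, to $\mathbb{E}_\beta[u(X)]$.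
   Context: $\mathbb{E}_\beta[u(X)]$ is the unique $v\in\mathbb{R}$ with $\mathbb{E}[(u(X)-v)^+]=(1+\beta)\mathbb{E}[(v-u(X))^+]$, i.e. $\sum_i p_i(u_i-v)^+=(1+\beta)\sum_ip_i(v-u_i)^+$. *)

From mathcomp Require Import all_boot all_order all_algebra.
Set Implicit Arguments. Unset Strict Implicit. Unset Printing Implicit Defensive.
Import Order.TTheory GRing.Theory Num.Theory.
Local Open Scope ring_scope.

Definition pospart (R : realFieldType) (x : R) : R := Num.max x 0.

(* v is E_beta[u(X)]: sum_i p_i (u_i - v)^+ = (1+beta) sum_i p_i (v - u_i)^+ *)
Definition is_Ebeta (R : realFieldType) (n : nat) (p uu : 'I_n -> R) (beta v : R) : Prop :=
  \sum_(i < n) p i * pospart (uu i - v) = (1 + beta) * \sum_(i < n) p i * pospart (v - uu i).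

Definition wt (R : realFieldType) (n : nat) (p uu : 'I_n -> R) (beta vprev : R) (i : 'I_n) : R :=
  if vprev <= uu i then p i else (1 + beta) * p i.

Fixpoint viter (R : realFieldType) (n : nat) (p uu : 'I_n -> R) (beta : R) (k : nat) : R :=
  match k with
  | 0 => \sum_(i < n) p i * uu i
  | k'.+1 =>
      let vp := viter p uu beta k' in
      (\sum_(i < n) wt p uu beta vp i * uu i) / (\sum_(j < n) wt p uu beta vp j)
  end.

(* Let g(a) = sum_i w_i(a) (u_i - a), with w(a) the reweighting weights at a.
   Then E_beta[u(X)] is the zero of g and v^(k+1) - v^(k) = g(v^(k)) / sum_i w_i(v^(k)).
   Every iterate is the mean of u under weights putting p_i or (1 + beta) p_i on
   each i, and switching such weights to w(a) changes the weighted deviation from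
   a by - beta p_i |u_i - a| at each i where they differ; hence g(v^(k)) = - beta d
   with d >= 0, and the iterates are monotone.  The next iterate only depends on the set
   {i | v^(k) <= u_i}, which is therefore monotone in k.  Until a fixed point is
   reached this set changes at every step (a repeated set gives a fixed point),
   never reaches the extreme set it moves towards (there g = 0 by the sign of g)
   and does not start at the opposite one (there g(v^(0)) = 0), so it takes at
   most n - 1 values. *)

From mathcomp Require Import all_boot all_order all_algebra.
From mathcomp Require Import ring.
Import Order.TTheory GRing.Theory Num.Theory.
Set Implicit Arguments. Unset Strict Implicit.
Local Open Scope ring_scope.

Lemma absorbing_of_set_chain (T : finType) (Z : nat -> bool) (S : nat -> {set T}) :
  (forall k, Z k -> Z k.+1) ->
  (forall k, S k \subset S k.+1) ->
  (forall k, S k = S k.+1 -> Z k.+1) ->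
  (forall k, S k = setT -> Z k) ->
  (~~ Z 0%N -> S 0%N != set0) ->
  forall k, (#|T|.-1 <= k)%N -> Z k.
Proof.
move=> Z_absorb S_incr S_eq S_full S0.
have card_gt k : ~~ Z k -> (k < #|S k|)%N.
  elim: k => [|k IHk] nZ; first by rewrite card_gt0 S0.
  have nZk : ~~ Z k by apply: contra (Z_absorb k) nZ.
  have S_proper : S k \proper S k.+1.
    by rewrite properEneq S_incr andbT; apply/eqP => /S_eq; apply/negP.
  exact: leq_ltn_trans (IHk nZk) (proper_card S_proper).
move=> k k_ge; apply/negPn/negP => nZ; move/negP: (nZ); apply; apply: S_full.
apply/eqP; rewrite eqEcard subsetT cardsT /=.
exact: leq_trans (leqSpred _) (leq_ltn_trans k_ge (card_gt k nZ)).
Qed.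

Lemma sum_dev_wmean (R : fieldType) (n : nat) (c a : 'I_n -> R) :
  \sum_(i < n) c i != 0 ->
  \sum_(i < n) c i * (a i - (\sum_(j < n) c j * a j) / \sum_(j < n) c j) = 0.
Proof.
move=> c_neq0; set m := _ / _.
have -> : \sum_(i < n) c i * (a i - m) = \sum_(i < n) c i * a i - m * \sum_(i < n) c i.
  by rewrite mulr_sumr -sumrB; apply: eq_bigr => i _; rewrite mulrBr (mulrC m).
by rewrite /m divfK // subrr.
Qed.

Section ReweightingIteration.
Variables (R : realFieldType) (n : nat) (p uu : 'I_n -> R) (beta : R).
Hypotheses (p_gt0 : forall i, 0 < p i) (sum_p : \sum_(i < n) p i = 1)
  (beta_gtN1 : -1 < beta).

Local Notation w := (wt p uu beta).
Local Notation v := (viter p uu beta).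

Definition gap (a : R) : R := \sum_(i < n) w a i * (uu i - a).
Definition reweight (a : R) : R := (\sum_(i < n) w a i * uu i) / \sum_(i < n) w a i.
Definition upper (a : R) : {set 'I_n} := [set i | a <= uu i].
Definition wt_on (A : pred 'I_n) (i : 'I_n) : R := if A i then (1 + beta) * p i else p i.

Lemma gapE a : gap a = \sum_(i < n) p i * pospart (uu i - a)
                     - (1 + beta) * \sum_(i < n) p i * pospart (a - uu i).
Proof.
rewrite mulr_sumr -sumrB; apply: eq_bigr => i _; rewrite /wt /pospart.
case: leP => ua.
- by rewrite max_l ?subr_ge0 // max_r ?subr_le0 //; ring.
- by rewrite max_r ?subr_le0 ?ltW // max_l ?subr_ge0 ?ltW //; ring.
Qed.

Lemma is_Ebeta_gap a : is_Ebeta p uu beta a <-> gap a = 0.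
Proof. by rewrite gapE /is_Ebeta; split=> [->|/eqP]; rewrite ?subrr // subr_eq0 => /eqP. Qed.

Lemma viterS k : v k.+1 = reweight (v k).
Proof. by []. Qed.

Lemma one_plus_beta_gt0 : 0 < 1 + beta.
Proof. by rewrite -ltrBlDl sub0r. Qed.

Lemma wt_gt0 a i : 0 < w a i.
Proof. by rewrite /wt; case: ifP => _; rewrite ?mulr_gt0 ?p_gt0 ?one_plus_beta_gt0. Qed.

Lemma sum_wt_gt0 a : 0 < \sum_(i < n) w a i.
Proof.
have [i0 _] : exists i : 'I_n, true.
  case: (pickP (@predT 'I_n)) => [i|none]; first by exists i.
  by move: sum_p; rewrite big_pred0 // => /eqP; rewrite eq_sym oner_eq0.
rewrite (bigD1 i0) //= ltr_pwDl ?wt_gt0 // sumr_ge0 // => i _.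
exact/ltW/wt_gt0.
Qed.

Lemma wt_wt_on a i : w a i = wt_on [pred j | uu j < a] i.
Proof. by rewrite /wt /wt_on /= ltNge; case: (a <= uu i). Qed.

Lemma sum_dev_viter0 : \sum_(i < n) p i * (uu i - v 0) = 0.
Proof.
have := sum_dev_wmean (c := p) uu; rewrite sum_p divr1; apply; exact: oner_neq0.
Qed.

Lemma viter_balanced k : exists A, \sum_(i < n) wt_on A i * (uu i - v k) = 0.
Proof.
case: k => [|k]; first by exists pred0; exact: sum_dev_viter0.
exists [pred j | uu j < v k]; under eq_bigr do rewrite -wt_wt_on.
exact/sum_dev_wmean/lt0r_neq0/sum_wt_gt0.
Qed.

Lemma gap_of_balanced A a : \sum_(i < n) wt_on A i * (uu i - a) = 0 ->
  exists2 d, 0 <= d & gap a = - (beta * d).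
Proof.
move=> balanced; exists (\sum_(i < n | A i != (uu i < a)) p i * `|uu i - a|).
  by apply: sumr_ge0 => i _; rewrite mulr_ge0 ?normr_ge0 ?ltW ?p_gt0.
rewrite -[gap a]subr0 -{1}balanced /gap -sumrB [in RHS]big_mkcond mulr_sumr -sumrN.
apply: eq_bigr => i _; rewrite wt_wt_on /wt_on /=.
case: (A i); case: ltP => ua /=; rewrite ?subrr ?mulr0 ?oppr0 //.
- by rewrite ger0_norm ?subr_ge0 //; ring.
- by rewrite ltr0_norm ?subr_lt0 //; ring.
Qed.

Lemma gap_viter k : exists2 d, 0 <= d & gap (v k) = - (beta * d).
Proof. by have [A] := viter_balanced k; apply: gap_of_balanced. Qed.

Lemma reweight_sub a : reweight a - a = gap a / \sum_(i < n) w a i.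
Proof.
rewrite /gap; under eq_bigr do rewrite mulrBr; rewrite sumrB -mulr_suml /reweight.
by field; rewrite lt0r_neq0 ?sum_wt_gt0.
Qed.

Lemma viterS_eq k : (v k.+1 == v k) = (gap (v k) == 0).
Proof.
by rewrite viterS -subr_eq0 reweight_sub mulf_eq0 invr_eq0 (gt_eqF (sum_wt_gt0 _)) orbF.
Qed.

Lemma viter_nonincreasing k : 0 <= beta -> v k.+1 <= v k.
Proof.
move=> beta_ge0; rewrite -subr_le0 viterS reweight_sub pmulr_lle0 ?invr_gt0 ?sum_wt_gt0 //.
by have [d d_ge0 ->] := gap_viter k; rewrite oppr_le0 mulr_ge0.
Qed.

Lemma viter_nondecreasing k : beta <= 0 -> v k <= v k.+1.
Proof.
move=> beta_le0; rewrite -subr_ge0 viterS reweight_sub pmulr_lge0 ?invr_gt0 ?sum_wt_gt0 //.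
by have [d d_ge0 ->] := gap_viter k; rewrite oppr_ge0 mulr_le0_ge0.
Qed.

Lemma gap_viterS_eq0 k : gap (v k) == 0 -> gap (v k.+1) == 0.
Proof. by rewrite -!viterS_eq => /eqP E; rewrite (viterS k.+1) E -viterS E. Qed.

Lemma reweight_upper a b : upper a = upper b -> reweight a = reweight b.
Proof.
move=> /setP E; have wE i : w a i = w b i by have := E i; rewrite !inE /wt => ->.
by rewrite /reweight; under eq_bigr do rewrite wE; under [X in _ / X]eq_bigr do rewrite wE.
Qed.

Lemma gap_viterS_of_upper k : upper (v k) = upper (v k.+1) -> gap (v k.+1) == 0.
Proof. by move=> E; rewrite -viterS_eq (viterS k.+1) -(reweight_upper E). Qed.

Lemma gap_upperT a : upper a = setT -> gap a = \sum_(i < n) p i * (uu i - a).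
Proof. by move=> /setP E; apply: eq_bigr => i _; have := E i; rewrite !inE /wt => ->. Qed.

Lemma gap_upper0 a :
  upper a = set0 -> gap a = (1 + beta) * \sum_(i < n) p i * (uu i - a).
Proof.
move=> /setP E; rewrite mulr_sumr; apply: eq_bigr => i _.
by have := E i; rewrite !inE /wt => ->; rewrite mulrA.
Qed.

Lemma gap_viter_eq0_of_ge0 k : 0 <= beta -> (n.-1 <= k)%N -> gap (v k) = 0.
Proof.
move=> beta_ge0 k_ge; apply/eqP; rewrite -[n]card_ord in k_ge; move: k k_ge.
apply: (absorbing_of_set_chain (Z := fun j => gap (v j) == 0) (S := fun j => upper (v j))).
- exact: gap_viterS_eq0.
- move=> j; apply/subsetP => i; rewrite !inE.
  exact: le_trans (viter_nonincreasing j beta_ge0).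
- exact: gap_viterS_of_upper.
- move=> j full; have [d d_ge0 gapE] := gap_viter j.
  rewrite eq_le {1}gapE oppr_le0 mulr_ge0 //= gap_upperT //.
  apply: sumr_ge0 => i _; apply: mulr_ge0; first exact/ltW/p_gt0.
  by rewrite subr_ge0; have := in_setT i; rewrite -full inE.
- by apply: contraNneq => /gap_upper0 ->; rewrite sum_dev_viter0 mulr0.
Qed.

Lemma gap_viter_eq0_of_le0 k : beta <= 0 -> (n.-1 <= k)%N -> gap (v k) = 0.
Proof.
move=> beta_le0 k_ge; apply/eqP; rewrite -[n]card_ord in k_ge; move: k k_ge.
apply: (absorbing_of_set_chain (Z := fun j => gap (v j) == 0) (S := fun j => ~: upper (v j))).
- exact: gap_viterS_eq0.
- move=> j; apply/subsetP => i; rewrite !inE -!ltNge => /lt_le_trans; apply.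
  exact: viter_nondecreasing.
- by move=> j /setC_inj; exact: gap_viterS_of_upper.
- move=> j; rewrite -setC0 => /setC_inj empty; have [d d_ge0 gapE] := gap_viter j.
  rewrite eq_le {2}gapE oppr_ge0 mulr_le0_ge0 // andbT gap_upper0 //.
  rewrite pmulr_rle0 ?one_plus_beta_gt0 //.
  apply: sumr_le0 => i _; rewrite pmulr_rle0 ?p_gt0 // subr_le0 ltW // ltNge.
  by have := in_set0 i; rewrite -empty inE => ->.
- by apply: contraNneq; rewrite -setCT => /setC_inj/gap_upperT ->; rewrite sum_dev_viter0.
Qed.

End ReweightingIteration.

Theorem theorem7 (R : realFieldType) (X : Type) (n : nat) (x : 'I_n -> X)
  (u : X -> R) (p : 'I_n -> R) (beta : R)
  (hp : forall i, 0 < p i) (hsum : \sum_(i < n) p i = 1) (hbeta : -1 < beta) :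
  let uu := fun i => u (x i) in
  ((forall k, viter p uu beta k <= viter p uu beta k.+1) \/
   (forall k, viter p uu beta k.+1 <= viter p uu beta k)) /\
  (forall k, (n.-1 <= k)%N -> is_Ebeta p uu beta (viter p uu beta k)).
Proof.
move=> uu; have [beta_ge0 | /ltW beta_le0] := lerP 0 beta; split=> [|k k_ge].
- by right=> k; apply: (viter_nonincreasing uu hp hsum hbeta).
- by apply/is_Ebeta_gap; apply: (gap_viter_eq0_of_ge0 uu hp hsum hbeta).
- by left=> k; apply: (viter_nondecreasing uu hp hsum hbeta).
- by apply/is_Ebeta_gap; apply: (gap_viter_eq0_of_le0 uu hp hsum hbeta).
Qed.
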